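(* Let $(a_n)_{n<0}$ be a sequence in $\mathbb{Z}((q))$ satisfying the lower bound condition, and for $j\in\mathbb{Z}$ define \[ r_j=-\sum_{k\ge|j|}a_{-k-1}\frac{(-1)^{k+j}q^{\binom{k+1}{2}+\binom{j+1}{2}}}{(q;q)_{k+j}(q;q)_{k-j}}\in\mathbb{Z}((q)). \] Then the series $\sum_{j\in\mathbb{Z}}r_j$ converges in $\mathbb{Z}((q))$ and \[ \sum_{j\in\mathbb{Z}}r_j=-a_{-1}. \]
   Context: $(a;q)_n=\prod_{i=0}^{n-1}(1-aq^i)$; $\binom{j+1}{2}=\frac{j(j+1)}{2}$ for all integers $j$. For $f\in\mathbb{Z}((q))$, $\delta(f)$ is the minimal exponent of $q$ in $f$. The lower bound condition: there is a constant $C$ with $\delta(a_n)\ge-\frac{n(n+3)}{2}+C$ for all $n<0$. Interpretation: $r_j$ is the term-by-term residue at $x=q^j$ of the inverted Habiro series $P(x)=\sum_{k\ge0}a_{-k-1}\frac{(-1)^kq^{\binom{k+1}{2}}}{(x;q)_{k+1}(qx^{-1};q)_k}$, and $a_{-1}$ (which equals $f_0$, the constant coefficient of its expansion at $x=0$) is its term-by-term residue at $x=\infty$. *)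

From mathcomp Require Import all_boot all_order all_algebra.
Set Implicit Arguments. Unset Strict Implicit. Unset Printing Implicit Defensive.
Import Order.TTheory GRing.Theory Num.Theory.
Local Open Scope ring_scope.

(* A Laurent series f in Z((q)) is represented by a pair (L, c):
   its coefficient of q^n is c n for n >= L and 0 for n < L.
   Two representations denote the same series iff all [coef] agree. *)
Definition laurent := (int * (int -> int))%type.

Definition coef (f : laurent) (n : int) : int := if n < f.1 then 0 else f.2 n.

Definition isum (a b : int) (F : int -> int) : int :=
  if a <= b then \sum_(0 <= t < absz (b - a + 1)) F (a + t%:Z) else 0.

Definition lzero : laurent := (0, fun _ => 0).
Definition lmono (e : int) (c : int) : laurent := (e, fun n => if n == e then c else 0).
Definition lconst (c : int) : laurent := lmono 0 c.
Definition ladd (f g : laurent) : laurent :=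
  (Num.min f.1 g.1, fun n => coef f n + coef g n).
Definition lopp (f : laurent) : laurent := (f.1, fun n => - coef f n).
(* Cauchy product; coefficients of f vanish below f.1, of g below g.1 *)
Definition lmul (f g : laurent) : laurent :=
  (f.1 + g.1, fun n => isum f.1 (n - g.1) (fun i => coef f i * coef g (n - i))).

Definition one_minus_qpow (i : nat) : laurent :=
  (0, fun n => (if n == 0 then 1 else 0) - (if n == i%:Z then 1 else 0)).

Definition qpoch (m : nat) : laurent :=
  foldr (fun i acc => lmul (one_minus_qpow i) acc) (lconst 1) (iota 1 m).

(* Inverse of a power series u with constant term 1:
   v_0 = 1, v_n = - sum_{i=1}^n u_i v_{n-i}.  pinv_list u n = [v_0; ...; v_n]. *)
Fixpoint pinv_list (u : nat -> int) (n : nat) : seq int :=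
  match n with
  | 0 => [:: 1]
  | n'.+1 => let s := pinv_list u n' in
             rcons s (- \sum_(1 <= i < n'.+2) u i * nth 0 s (n'.+1 - i))
  end.

Definition pinv (f : laurent) : laurent :=
  (0, fun n => nth 0 (pinv_list (fun i => coef f i%:Z) (absz n)) (absz n)).

(* binom(j+1,2) = j(j+1)/2 for all integers j *)
Definition binom2 (j : int) : int := divz (j * (j + 1)) 2.

Definition val_ge (f : laurent) (b : int) : Prop :=
  forall m : int, m < b -> coef f m = 0.

Definition psum (F : nat -> laurent) (M : nat) : laurent :=
  \big[ladd/lzero]_(k < M) F k.

Definition HasSumN (F : nat -> laurent) (s : laurent) : Prop :=
  forall N : int, exists M : nat, forall M' : nat, (M <= M')%N ->
    forall n : int, n < N -> coef (psum F M') n = coef s n.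

Definition HasSumZ (r : int -> laurent) (s : laurent) : Prop :=
  exists s1 s2 : laurent,
    HasSumN (fun t => r t%:Z) s1 /\
    HasSumN (fun t => r (- (t.+1)%:Z)) s2 /\
    forall n : int, coef s n = coef s1 n + coef s2 n.

Definition rterm (a : int -> laurent) (j : int) (k : nat) : laurent :=
  if (`|j| <= k%:Z) then
    lopp (lmul (a (- (k%:Z) - 1))
           (lmul (lmono (binom2 k%:Z + binom2 j) ((-1) ^ (k%:Z + j)))
                 (lmul (pinv (qpoch (absz (k%:Z + j))))
                       (pinv (qpoch (absz (k%:Z - j)))))))
  else lzero.

From mathcomp Require Import all_boot all_order all_algebra.
From mathcomp Require Import zify ring lra.
Import Order.TTheory GRing.Theory Num.Theory.
Local Open Scope ring_scope.

(** The k-th summand of r_j has q-adic valuation at least k + 1 + C by the lower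
    bound on a_{-k-1}.  Hence every r_j converges, r_j has valuation at least
    |j| + 1 + C, and the double series may be summed over k first.  For fixed k,
    writing i = k + j, the summands with |j| <= k add up to
      -a_{-k-1} q^{binom(k+1,2)} / (q;q)_{2k} *
        sum_i (-1)^i q^{binom(i-k+1,2)} [2k choose i]_q,
    and by the q-binomial theorem the last sum is, up to a power of q, the
    product prod_{t<2k} (q^{k-1} - q^t), which vanishes for k > 0.  Only k = 0
    survives, contributing -a_{-1}.  Identities between power series are checked
    on their truncations modulo q^N, which are polynomials. *)

Lemma sumr_ord_trunc (V : nmodType) (G : nat -> V) K L : (L <= K)%N ->
  (forall t, (L <= t < K)%N -> G t = 0) -> \sum_(t < K) G t = \sum_(t < L) G t.
Proof.
move=> L_le G0; rewrite (big_ord_widen _ _ L_le) [RHS]big_mkcond /=.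
by apply: eq_bigr => t _; case: ltnP => // t_ge; rewrite G0 // t_ge ltn_ord.
Qed.

Lemma sum_int_halves_triangle (V : zmodType) (G : int -> nat -> V) K :
  (forall j k, k%:Z < `|j| -> G j k = 0) ->
  \sum_(t < K) \sum_(k < K) G t%:Z k + \sum_(t < K) \sum_(k < K) G (- t.+1%:Z) k =
  \sum_(k < K) \sum_(i < (2 * k).+1) G (i%:Z - k%:Z) k.
Proof.
move=> G0; rewrite [X in X + _]exchange_big [X in _ + X]exchange_big -big_split /=.
apply: eq_bigr => k _; have k_lt := ltn_ord k.
rewrite (@sumr_ord_trunc _ (fun t => G t%:Z k) K k.+1 k_lt); last first.
  by move=> t /andP[t_gt _]; rewrite G0 //; lia.
rewrite (@sumr_ord_trunc _ (fun t => G (- t.+1%:Z) k) K k (ltnW k_lt)); last first.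
  by move=> t /andP[t_ge _]; rewrite G0 //; lia.
rewrite -(big_mkord xpredT (fun i => G (i%:Z - k%:Z) k)).
rewrite (@big_cat_nat _ _ _ k) //=; last by lia.
rewrite [RHS]addrC (big_addn 0 (2 * k).+1 k) (_ : ((2 * k).+1 - k = k.+1)%N); last by lia.
rewrite [X in _ = _ + X]big_nat_rev !big_mkord; congr (_ + _); apply: eq_bigr => i _.
  by congr G; lia.
by have i_lt := ltn_ord i; congr G; lia.
Qed.

Section TakePolyMul.
Variable R : nzRingType.
Implicit Types p q : {poly R}.

Lemma take_polyMl N p q : take_poly N (take_poly N p * q) = take_poly N (p * q).
Proof.
apply/polyP => i; rewrite !coef_take_poly; case: ifP => // i_lt.
rewrite !coefM; apply: eq_bigr => j _; have j_lt := ltn_ord j.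
by rewrite coef_take_poly ifT //; lia.
Qed.

Lemma take_polyMr N p q : take_poly N (p * take_poly N q) = take_poly N (p * q).
Proof.
apply/polyP => i; rewrite !coef_take_poly; case: ifP => // i_lt.
rewrite !coefM; apply: eq_bigr => j _; have j_lt := ltn_ord j.
by rewrite coef_take_poly ifT //; lia.
Qed.

Lemma take_polyM N p q :
  take_poly N (p * q) = take_poly N (take_poly N p * take_poly N q).
Proof. by rewrite take_polyMl take_polyMr. Qed.

End TakePolyMul.

(** * Gaussian binomial coefficients *)

Definition qpoch_poly {R : nzRingType} (m : nat) : {poly R} :=
  \prod_(i <- iota 1 m) (1 - 'X^i).

Lemma qpoch_poly_coef0 (R : comNzRingType) m : (qpoch_poly m : {poly R})`_0 = 1.
Proof.
rewrite -horner_coef0 /qpoch_poly horner_prod big_seq big1 // => i.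
by rewrite mem_iota !hornerE expr0n; case: i => // i _; rewrite subr0.
Qed.

Section QBinomial.
Variable R : comNzRingType.

Fixpoint qbinom (n i : nat) : {poly R} :=
  match n, i with
  | _, 0 => 1
  | 0, _.+1 => 0
  | n'.+1, i'.+1 => qbinom n' i'.+1 + 'X^(n' - i') * qbinom n' i'
  end.

Lemma qbinom_n0 n : qbinom n 0 = 1.
Proof. by case: n. Qed.

Lemma qbinomSS n i : qbinom n.+1 i.+1 = qbinom n i.+1 + 'X^(n - i) * qbinom n i.
Proof. by []. Qed.

Lemma qbinom_small n i : (n < i)%N -> qbinom n i = 0.
Proof. by elim: n i => [|n IHn] [|i] //= ?; rewrite !IHn ?mulr0 ?addr0 //; lia. Qed.

Lemma qpoch_polyS m : qpoch_poly m.+1 = qpoch_poly m * (1 - 'X^(m.+1)) :> {poly R}.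
Proof. by rewrite /qpoch_poly -[m.+1]addn1 iotaD big_cat big_seq1 addnC. Qed.

Lemma qpoch_poly_qbinom n i : (i <= n)%N ->
  qpoch_poly i * qpoch_poly (n - i) * qbinom n i = qpoch_poly n :> {poly R}.
Proof.
have qpoch_poly0 : qpoch_poly 0 = 1 :> {poly R} by rewrite /qpoch_poly big_nil.
elim: n i => [|n IHn] [|i] //= i_le.
- by rewrite qpoch_poly0 !mul1r.
- by rewrite qpoch_poly0 !mul1r subn0 mulr1.
have left_part : qpoch_poly i.+1 * qpoch_poly (n - i) * ('X^(n - i) * qbinom n i) =
    (1 - 'X^(i.+1)) * 'X^(n - i) * qpoch_poly n.
  by rewrite qpoch_polyS -(IHn i) //; ring.
have right_part : qpoch_poly i.+1 * qpoch_poly (n - i) * qbinom n i.+1 =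
    (1 - 'X^(n - i)) * qpoch_poly n.
  case: (ltnP i n) => [i_lt | n_le]; last first.
    by rewrite (_ : i = n) ?qbinom_small ?subnn ?expr0 ?subrr ?mulr0 ?mul0r //; lia.
  rewrite (_ : (n - i = (n - i.+1).+1)%N); last by lia.
  by rewrite (qpoch_polyS (n - i.+1)) -(IHn i.+1) //; ring.
rewrite subSS mulrDr right_part left_part qpoch_polyS.
have XnS : 'X^(n - i) * 'X^(i.+1) = 'X^(n.+1) :> {poly R}.
  by rewrite -exprD; congr (_ ^+ _); lia.
by rewrite -XnS; ring.
Qed.

Lemma qbinomial_theorem n s :
  \sum_(i < n.+1) (-1) ^+ i * 'X^('C(i, 2) + s * (n - i)) * qbinom n i =
  \prod_(t < n) ('X^s - 'X^t).
Proof.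
elim: n => [|n IHn]; first by rewrite big_ord1 big_ord0 muln0 expr0 !mul1r.
rewrite [RHS]big_ord_recr [RHS]/= -IHn mulrBr !mulr_suml.
pose T i := (-1) ^+ i * 'X^('C(i, 2) + s * (n - i)) * qbinom n i : {poly R}.
pose c j := (-1) ^+ j.+1 * 'X^('C(j.+1, 2) + s * (n - j)) : {poly R}.
have shift_s : \sum_(i < n.+1) T i * 'X^s =
    'X^(s * n.+1) + \sum_(j < n.+1) c j * qbinom n j.+1.
  rewrite big_ord_recl [in RHS]big_ord_recr /= (@qbinom_small n n.+1) // mulr0 addr0.
  rewrite /T qbinom_n0 subn0 expr0 !mul1r mulr1 -exprD mulnS addnC; congr (_ + _).
  apply: eq_bigr => j _; rewrite /c /bump /= add1n.
  have -> : (s * (n - j) = s + s * (n - j.+1))%N.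
    by have j_lt := ltn_ord j; rewrite -mulnS; congr (_ * _); lia.
  by rewrite !exprD; ring.
have shift_n : \sum_(i < n.+1) T i * 'X^n =
    - \sum_(j < n.+1) c j * ('X^(n - j) * qbinom n j).
  rewrite -sumrN; apply: eq_bigr => j _; rewrite /T /c binS bin1.
  have -> : 'X^n = 'X^j * 'X^(n - j) :> {poly R}.
    by have j_lt := ltn_ord j; rewrite -exprD; congr (_ ^+ _); lia.
  by rewrite !exprD exprS; ring.
rewrite shift_s shift_n opprK big_ord_recl qbinom_n0 subn0 expr0 !mul1r mulr1.
rewrite -addrA -big_split; congr (_ + _); apply: eq_bigr => j _.
by rewrite /c lift0 qbinomSS subSS mulrDr.
Qed.

End QBinomial.

Lemma binom2E x : binom2 x * 2 = x * (x + 1).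
Proof.
rewrite /binom2 divzK //; apply/dvdzP.
have [r r01 ->] : exists2 r, (r == 0) || (r == 1) & x = (x %/ 2)%Z * 2 + r.
  by exists (x %% 2)%Z; [lia | exact: divz_eq].
set q := (x %/ 2)%Z.
case/orP: r01 => /eqP ->;
  [exists (q * (q * 2 + 1)) | exists ((q * 2 + 1) * (q + 1))]; ring.
Qed.

Lemma binom2_ge0 x : 0 <= binom2 x.
Proof. by have := binom2E x; nia. Qed.

Lemma bin2E i : 'C(i, 2)%:Z * 2 = i%:Z * (i%:Z - 1).
Proof. by elim: i => // i IHi; rewrite binS bin1 PoszD mulrDl IHi; lia. Qed.

Lemma binom2_exponent (k i : nat) : (0 < k)%N -> (i <= 2 * k)%N ->
  (k * k + absz (binom2 k%:Z + binom2 (i%:Z - k%:Z))%R =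
   2 * k + ('C(i, 2) + k.-1 * (2 * k - i)))%N.
Proof.
move=> k_gt0 i_le; apply/eqP; rewrite -eqz_nat; apply/eqP.
have predk_mul : (k.-1 * (2 * k - i))%N%:Z = (k%:Z - 1) * (2 * k%:Z - i%:Z).
  by rewrite PoszM; congr (_ * _); lia.
have := binom2E k%:Z; have := binom2E (i%:Z - k%:Z); have := bin2E i.
have := binom2_ge0 k%:Z; have := binom2_ge0 (i%:Z - k%:Z).
move: (binom2 k%:Z) (binom2 (i%:Z - k%:Z)) 'C(i, 2) => bk bi c bi_ge0 bk_ge0 c2 bi2 bk2.
rewrite !PoszD PoszM predk_mul gez0_abs ?addr_ge0 //.
by apply: (@mulIf _ 2) => //; rewrite !mulrDl bk2 bi2 c2; ring.
Qed.

Lemma qbinom_alt_sum_eq0 (R : comNzRingType) k : (0 < k)%N ->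
  \sum_(i < (2 * k).+1)
     (-1) ^+ i * 'X^(absz (binom2 k%:Z + binom2 (i%:Z - k%:Z))) * qbinom R (2 * k) i = 0.
Proof.
move=> k_gt0.
have Xreg : GRing.lreg ('X^(k * k) : {poly R}).
  by apply: lreg_lead; rewrite lead_coefXn; exact: lreg1.
apply: Xreg; rewrite mulr0 mulr_sumr.
(* Up to the factor X^(2k) this is the q-binomial theorem at s = k.-1, whose
   product contains the factor X^(k.-1) - X^(k.-1). *)
transitivity ('X^(2 * k) * \sum_(i < (2 * k).+1)
    (-1) ^+ i * 'X^('C(i, 2) + k.-1 * (2 * k - i)) * qbinom R (2 * k) i).
  rewrite mulr_sumr; apply: eq_bigr => i _.
  have i_le : (i <= 2 * k)%N by rewrite -ltnS.
  have X_shift : 'X^(k * k) * 'X^(absz (binom2 k%:Z + binom2 (i%:Z - k%:Z))) =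
      'X^(2 * k) * 'X^('C(i, 2) + k.-1 * (2 * k - i)) :> {poly R}.
    by rewrite -!exprD binom2_exponent.
  transitivity ((-1) ^+ i * ('X^(k * k) * 'X^(absz (binom2 k%:Z + binom2 (i%:Z - k%:Z))))
    * qbinom R (2 * k) i); first by ring.
  by rewrite X_shift; ring.
have k1_lt : (k.-1 < 2 * k)%N by lia.
by rewrite qbinomial_theorem (bigD1 (Ordinal k1_lt)) //= subrr mul0r mulr0.
Qed.

Lemma isum_eq0 (a b : int) (F : int -> int) :
  (forall i, a <= i <= b -> F i = 0) -> isum a b F = 0.
Proof.
move=> F0; rewrite /isum; case: ifP => // a_b.
by rewrite big_nat_cond big1 // => t /andP[/andP[_ ht] _]; apply: F0; lia.
Qed.

Lemma isum_widen (a b lo : int) (W : nat) (F : int -> int) :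
  lo <= a -> b < lo + W%:Z -> (forall i, F i != 0 -> a <= i <= b) ->
  isum a b F = \sum_(t < W) F (lo + t%:Z).
Proof.
move=> lo_a b_W suppF.
have F0 i : ~~ (a <= i <= b) -> F i = 0.
  by move=> i_out; apply/eqP; apply: contraNT i_out => /suppF.
rewrite /isum; case: ifP => a_b; last by rewrite big1 // => t _; apply: F0; lia.
set d := absz (a - lo); set L := absz (b - a + 1).
have [d_eq L_eq] : d%:Z = a - lo /\ L%:Z = b - a + 1 by rewrite /d /L; lia.
rewrite -(big_mkord xpredT (fun t => F (lo + t%:Z))).
rewrite [RHS](@big_cat_nat _ _ _ d) /=; [|lia|lia].
rewrite [X in _ = X + _]big_nat_cond [X in _ = X + _]big1 ?add0r; last first.
  by move=> t /andP[/andP[_ ht] _]; apply: F0; lia.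
rewrite [RHS](@big_cat_nat _ _ _ (d + L)) /=; [|lia|lia].
rewrite [X in _ = _ + X]big_nat_cond [X in _ = _ + X]big1 ?addr0; last first.
  by move=> t /andP[/andP[ht _] _]; apply: F0; lia.
rewrite -{1}(add0n d) big_addn addKn.
by apply: eq_bigr => t _; congr F; lia.
Qed.

Lemma isum_supp (a b a' b' : int) (F : int -> int) :
  (forall i, F i != 0 -> a <= i <= b) -> (forall i, F i != 0 -> a' <= i <= b') ->
  isum a b F = isum a' b' F.
Proof.
move=> supp supp'; pose lo := Num.min a a'.
pose W := (absz (b - lo) + absz (b' - lo) + 1)%N.
by rewrite (@isum_widen a b lo W) ?(@isum_widen a' b' lo W) // /W /lo; lia.
Qed.

Lemma isum1 (n : int) (F : int -> int) : isum n n F = F n.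
Proof. by rewrite /isum lexx subrr add0r big_nat1 addr0. Qed.

Lemma isum_nat (m : nat) (F : int -> int) :
  isum 0 m%:Z F = \sum_(j < m.+1) F j%:Z.
Proof.
rewrite /isum (_ : 0 <= m%:Z = true) //.
by rewrite subr0 (_ : absz _ = m.+1) ?big_mkord //; lia.
Qed.

Lemma exchange_isum (I : Type) (r : seq I) (a b : int) (F : I -> int -> int) :
  \sum_(t <- r) isum a b (F t) = isum a b (fun i => \sum_(t <- r) F t i).
Proof. by rewrite /isum; case: ifP => _; [rewrite exchange_big | rewrite big1]. Qed.

Lemma coef_neq0_fst (f : laurent) (n : int) : coef f n != 0 -> f.1 <= n.
Proof. by rewrite /coef; case: ltP => // _; rewrite eqxx. Qed.

Lemma coef_pair_ge (C : int) (c : int -> int) (n : int) :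
  C <= n -> coef (C, c) n = c n.
Proof. by rewrite /coef /= ltNge => ->. Qed.

Lemma coef_lzero (n : int) : coef lzero n = 0.
Proof. by rewrite /coef; case: ifP. Qed.

Lemma coef_ladd (f g : laurent) (n : int) : coef (ladd f g) n = coef f n + coef g n.
Proof.
rewrite {1}/coef /=; case: ifP => // n_lt.
by rewrite /coef ifT ?ifT ?addr0 //; lia.
Qed.

Lemma coef_lopp (f : laurent) (n : int) : coef (lopp f) n = - coef f n.
Proof.
by rewrite {1}/coef /=; case: ifP => n_lt; rewrite ?oppr0 // /coef n_lt.
Qed.

Lemma coef_lmono (e c n : int) : coef (lmono e c) n = if n == e then c else 0.
Proof. by rewrite /coef /=; case: ltgtP. Qed.

Lemma coef_psum (F : nat -> laurent) (M : nat) (n : int) :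
  coef (psum F M) n = \sum_(k < M) coef (F k) n.
Proof.
rewrite /psum; elim: (index_enum _) => [|k r IHr].
  by rewrite !big_nil coef_lzero.
by rewrite !big_cons coef_ladd IHr.
Qed.

Lemma val_geW (f : laurent) (a b : int) : val_ge f a -> b <= a -> val_ge f b.
Proof. by move=> fa ba m mb; apply: fa; lia. Qed.

Lemma val_ge_fst (f : laurent) (b : int) : b <= f.1 -> val_ge f b.
Proof. by move=> bf m mb; rewrite /coef; case: ifP => //; lia. Qed.

Lemma val_ge_lmul {f g : laurent} {a b : int} :
  val_ge f a -> val_ge g b -> val_ge (lmul f g) (a + b).
Proof.
move=> fa gb n n_lt; rewrite /coef; case: ifP => // _.
apply: isum_eq0 => i _; case: (ltP i a) => i_a; first by rewrite fa ?mul0r.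
by rewrite gb ?mulr0 //; lia.
Qed.

Lemma coef_lmul (f g : laurent) (n : int) : val_ge g 0 ->
  coef (lmul f g) n = isum f.1 n (fun i => coef f i * coef g (n - i)).
Proof.
move=> g_ge0.
have supp i : coef f i * coef g (n - i) != 0 -> f.1 <= i /\ g.1 <= n - i /\ 0 <= n - i.
  rewrite mulf_eq0 negb_or => /andP[fi gi].
  split; first exact: coef_neq0_fst.
  split; first exact: coef_neq0_fst gi.
  by case: ltP gi => // ? ; rewrite g_ge0.
rewrite {1}/coef /=; case: ifP => n_lt.
  by symmetry; apply: isum_eq0 => i _; apply/eqP; apply: contraT => /supp; lia.
by apply: isum_supp => i /supp; lia.
Qed.

Lemma coef_lmul_nat (f g : laurent) (m : nat) : val_ge f 0 -> val_ge g 0 ->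
  coef (lmul f g) m%:Z = \sum_(j < m.+1) coef f j%:Z * coef g (m - j)%N%:Z.
Proof.
move=> f_ge0 g_ge0.
have supp i : coef f i * coef g (m%:Z - i) != 0 -> f.1 <= i /\ 0 <= i <= m.
  rewrite mulf_eq0 negb_or => /andP[fi gi]; split; first exact: coef_neq0_fst.
  case: (ltP i 0) fi => [/f_ge0 -> //|_ _].
  by case: (ltP (m%:Z - i) 0) gi => [/g_ge0 -> //|]; lia.
rewrite coef_lmul // (@isum_supp _ _ 0 m) => [|i /supp|i /supp]; try lia.
by rewrite isum_nat; apply: eq_bigr => j _; rewrite subzn // -ltnS.
Qed.

Lemma coef_lmul_unit (f g : laurent) (n : int) :
  (forall m, coef g m = (m == 0)%:R) ->
  coef (lmul f g) n = coef f n.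
Proof.
move=> g1; rewrite coef_lmul; last by move=> m m_lt; rewrite g1; case: eqP => //; lia.
have supp i : coef f i * coef g (n - i) != 0 -> f.1 <= i <= n /\ n <= i <= n.
  rewrite g1 mulf_eq0 negb_or => /andP[/coef_neq0_fst ?]; case: eqP => // ? _; lia.
rewrite (@isum_supp _ _ n n) ?isum1 ?g1 ?subrr ?mulr1 // => i /supp[] //.
Qed.

(** * Truncations modulo q^N *)

Definition ltrunc (N : nat) (f : laurent) : {poly int} := \poly_(i < N) coef f i%:Z.

Lemma coef_ltrunc N f i : (ltrunc N f)`_i = if (i < N)%N then coef f i%:Z else 0.
Proof. exact: coef_poly. Qed.

Lemma coef_ltruncS (m : nat) f : (ltrunc m.+1 f)`_m = coef f m%:Z.
Proof. by rewrite coef_ltrunc ltnSn. Qed.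

Lemma ltrunc_lmul N f g : val_ge f 0 -> val_ge g 0 ->
  ltrunc N (lmul f g) = take_poly N (ltrunc N f * ltrunc N g).
Proof.
move=> f_ge0 g_ge0; apply/polyP => i.
rewrite coef_ltrunc coef_take_poly; case: ifP => // i_lt.
rewrite coef_lmul_nat // coefM; apply: eq_bigr => j _; have j_lt := ltn_ord j.
by rewrite !coef_ltrunc !ifT //; lia.
Qed.

Lemma ltrunc_lmono N e c : 0 <= e ->
  ltrunc N (lmono e c) = take_poly N (c%:P * 'X^(absz e)).
Proof.
move=> e_ge0; apply/polyP => i.
rewrite coef_ltrunc coef_take_poly coef_lmono coefCM coefXn; case: ifP => // _.
have -> : (i%:Z == e) = (i == absz e) by apply/eqP/eqP; lia.
by case: eqP; rewrite ?mulr1 ?mulr0.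
Qed.

Lemma ltrunc_one_minus_qpow N i : ltrunc N (one_minus_qpow i) = take_poly N (1 - 'X^i).
Proof.
apply/polyP => j; rewrite coef_ltrunc coef_take_poly; case: ifP => // _.
rewrite /coef /= coefB coef1 coefXn.
have -> : (j%:Z == 0) = (j == 0)%N by apply/eqP/eqP; lia.
have -> : (j%:Z == i%:Z) = (j == i) by apply/eqP/eqP; lia.
by case: (j == 0)%N; case: (j == i).
Qed.

Lemma size_pinv_list u n : size (pinv_list u n) = n.+1.
Proof. by elim: n => //= n IHn; rewrite size_rcons IHn. Qed.

Lemma nth_pinv_list u n i : (i <= n)%N ->
  nth 0 (pinv_list u n) i = nth 0 (pinv_list u i) i.
Proof.
elim: n => [|n IHn]; first by rewrite leqn0 => /eqP ->.
rewrite leq_eqVlt => /predU1P[-> //|i_lt].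
by rewrite /= nth_rcons size_pinv_list i_lt IHn.
Qed.

Lemma coef_pinvS f (n : nat) : coef (pinv f) n.+1 =
  - \sum_(1 <= i < n.+2) coef f i%:Z * coef (pinv f) (n.+1 - i)%N%:Z.
Proof.
rewrite {1}/coef /= nth_rcons size_pinv_list ltnn eqxx.
pose F i := coef f i%:Z * coef (pinv f) (n.+1 - i)%N%:Z.
rewrite (@eq_big_nat _ _ _ _ _ _ F) // => i /andP[i_ge i_lt].
by rewrite nth_pinv_list; last lia.
Qed.

Lemma ltrunc_pinv N f : val_ge f 0 -> coef f 0 = 1 ->
  take_poly N (ltrunc N (pinv f) * ltrunc N f) = take_poly N 1.
Proof.
move=> f_ge0 f0; apply/polyP => m; rewrite !coef_take_poly; case: ifP => // m_lt.
rewrite mulrC coefM coef1.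
have coef_ltrunc_le j g : (j <= m)%N -> (ltrunc N g)`_j = coef g j%:Z.
  by move=> j_le; rewrite coef_ltrunc ifT //; lia.
rewrite (eq_bigr (fun j : 'I_m.+1 => coef f j%:Z * coef (pinv f) (m - j)%N%:Z));
  last first.
  by move=> j _; rewrite !coef_ltrunc_le // ?leq_subr // -ltnS.
case: m {m_lt coef_ltrunc_le} => [|n]; first by rewrite big_ord1 f0 mul1r.
by rewrite big_ord_recl f0 mul1r subn0 coef_pinvS big_add1 big_mkord addrC subrr.
Qed.

Lemma qpoch_fst m : (qpoch m).1 = 0.
Proof. by rewrite /qpoch; elim: (iota 1 m) => //= i s ->. Qed.

Lemma ltrunc_qpoch N m : ltrunc N (qpoch m) = take_poly N (qpoch_poly m).
Proof.
rewrite /qpoch /qpoch_poly; elim: (iota 1 m) => [|i s IHs] /=.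
  by rewrite big_nil ltrunc_lmono // mul1r expr0.
rewrite ltrunc_lmul ?big_cons ?IHs ?ltrunc_one_minus_qpow -?take_polyM //.
  exact: val_ge_fst.
by apply: val_ge_fst; elim: s {IHs} => //= j s; rewrite add0r.
Qed.

Lemma coef_qpoch0 m : coef (qpoch m) 0 = 1.
Proof.
have := coef_ltrunc 1 (qpoch m) 0.
by rewrite ltrunc_qpoch coef_take_poly qpoch_poly_coef0.
Qed.

Definition rweight (k : nat) (j : int) : laurent :=
  lmul (lmono (binom2 k%:Z + binom2 j) ((-1) ^ (k%:Z + j)))
       (lmul (pinv (qpoch (absz (k%:Z + j)))) (pinv (qpoch (absz (k%:Z - j))))).

Lemma rtermE a j k : rterm a j k =
  if `|j| <= k%:Z then lopp (lmul (a (- k%:Z - 1)) (rweight k j)) else lzero.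
Proof. by []. Qed.

Lemma rterm_small a j k : k%:Z < `|j| -> rterm a j k = lzero.
Proof. by move=> k_lt; rewrite rtermE ifF //; lia. Qed.

Lemma val_ge_rweight k j : val_ge (rweight k j) (binom2 k%:Z + binom2 j).
Proof.
rewrite -[_ + _]addr0; apply: val_ge_lmul; first exact: val_ge_fst.
by rewrite -(addr0 0); apply: val_ge_lmul; apply: val_ge_fst.
Qed.

Lemma rweight_ge0 k j : val_ge (rweight k j) 0.
Proof.
by apply: val_geW (val_ge_rweight k j) _; rewrite addr_ge0 ?binom2_ge0.
Qed.

Lemma ltrunc_pinv_qpoch N m :
  take_poly N (ltrunc N (pinv (qpoch m)) * qpoch_poly m) = take_poly N 1.
Proof.
rewrite -take_polyMr -ltrunc_qpoch ltrunc_pinv ?coef_qpoch0 //.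
by apply: val_ge_fst; rewrite qpoch_fst.
Qed.

Lemma ltrunc_pinv_qpochM N n i : (i <= n)%N ->
  take_poly N (ltrunc N (pinv (qpoch i)) * ltrunc N (pinv (qpoch (n - i)%N))) =
  take_poly N (qbinom int n i * ltrunc N (pinv (qpoch n))).
Proof.
move=> i_le; set V := fun m => ltrunc N (pinv (qpoch m)).
transitivity (take_poly N (V i * V (n - i)%N * take_poly N 1)).
  by rewrite take_polyMr mulr1.
rewrite -(ltrunc_pinv_qpoch N n) take_polyMr -(@qpoch_poly_qbinom int n i i_le).
have -> : V i * V (n - i)%N *
      (V n * (qpoch_poly i * qpoch_poly (n - i)%N * qbinom int n i)) =
    (V i * qpoch_poly i) *
      ((V (n - i)%N * qpoch_poly (n - i)%N) * (qbinom int n i * V n)).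
  by ring.
by rewrite -take_polyMl ltrunc_pinv_qpoch take_polyMl mul1r -take_polyMl
  ltrunc_pinv_qpoch take_polyMl mul1r.
Qed.

Lemma ltrunc_rweight N k i : (i <= 2 * k)%N ->
  ltrunc N (rweight k (i%:Z - k%:Z)) =
  take_poly N ((-1) ^+ i * 'X^(absz (binom2 k%:Z + binom2 (i%:Z - k%:Z))) *
               qbinom int (2 * k) i * ltrunc N (pinv (qpoch (2 * k)))).
Proof.
move=> i_le; have e_ge0 := addr_ge0 (binom2_ge0 k%:Z) (binom2_ge0 (i%:Z - k%:Z)).
rewrite /rweight ltrunc_lmul; first last.
- by rewrite -(addr0 0); apply: val_ge_lmul; apply: val_ge_fst.
- exact: val_ge_fst.
rewrite ltrunc_lmul ?ltrunc_lmono //; try exact: val_ge_fst.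
have -> : k%:Z + (i%:Z - k%:Z) = i%:Z by rewrite addrC subrK.
have -> : k%:Z - (i%:Z - k%:Z) = (2 * k - i)%N%:Z by lia.
rewrite !absz_nat.
rewrite -take_polyM -take_polyMr ltrunc_pinv_qpochM // take_polyMr.
by rewrite mulrA -exprnP rmorphXn /= polyCN polyC1.
Qed.

Lemma coef_rweight00 m : coef (rweight 0 0) m = (m == 0)%:R.
Proof.
case: m => m; last by rewrite rweight_ge0.
rewrite -coef_ltruncS; have := @ltrunc_rweight m.+1 0 0 (leq0n _).
have V0 := ltrunc_pinv_qpoch m.+1 0; rewrite /qpoch_poly big_nil mulr1 in V0.
by rewrite subrr => ->; rewrite expr0 !mul1r V0 coef_take_poly ltnSn coef1.
Qed.

Lemma sum_rweight_column k m : (0 < k)%N ->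
  \sum_(i < (2 * k).+1) coef (rweight k (i%:Z - k%:Z)) m = 0.
Proof.
move=> k_gt0; case: m => m; last by rewrite big1 // => i _; rewrite rweight_ge0.
under eq_bigr do rewrite -coef_ltruncS.
rewrite -coef_sum.
under eq_bigr => i _ do rewrite (@ltrunc_rweight m.+1 k i (ltn_ord i)).
by rewrite -take_poly_sum -mulr_suml qbinom_alt_sum_eq0 // mul0r take_poly0r coef0.
Qed.

Lemma sum_rterm_column a k n :
  \sum_(i < (2 * k).+1) coef (rterm a (i%:Z - k%:Z) k) n =
  if k == 0%N then - coef (a (-1)) n else 0.
Proof.
pose A := a (- k%:Z - 1).
have coef_rterm (i : 'I_(2 * k).+1) : coef (rterm a (i%:Z - k%:Z) k) n =
    - isum A.1 n (fun l => coef A l * coef (rweight k (i%:Z - k%:Z)) (n - l)).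
  have i_le := ltn_ord i; rewrite rtermE ifT; last by lia.
  by rewrite coef_lopp coef_lmul //; exact: rweight_ge0.
case: k => [|k] in A coef_rterm *.
  rewrite big_ord1 subrr rtermE normr0 lexx coef_lopp coef_lmul_unit //.
  exact: coef_rweight00.
rewrite (eq_bigr _ (fun i _ => coef_rterm i)) sumrN exchange_isum isum_eq0 ?oppr0 //.
by move=> l _; rewrite -mulr_sumr sum_rweight_column // mulr0.
Qed.

(** * Convergence *)

Definition lsum (C : int) (F : nat -> laurent) : laurent :=
  (C, fun n => \sum_(t < absz (n - C)) coef (F t) n).

Section TailSums.
Context {C : int} {F : nat -> laurent}.
Hypothesis F_val : forall t, val_ge (F t) (t%:Z + 1 + C).

Lemma coef_lsum n (K : nat) : n - C <= K%:Z ->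
  coef (lsum C F) n = \sum_(t < K) coef (F t) n.
Proof.
move=> K_ge; case: (ltP n C) => [n_lt | n_ge].
  by rewrite /coef ifT // big1 // => t _; apply: F_val; lia.
rewrite coef_pair_ge // (@sumr_ord_trunc _ (fun t => coef (F t) n) K (absz (n - C))) //.
  by lia.
by move=> t /andP[t_ge _]; apply: F_val; lia.
Qed.

Lemma hasSumN_lsum : HasSumN F (lsum C F).
Proof.
move=> N; exists (absz (N - C)) => M M_ge n n_lt.
by rewrite coef_psum (coef_lsum _ M) //; lia.
Qed.

Lemma val_ge_lsum b : (forall t, val_ge (F t) b) -> val_ge (lsum C F) b.
Proof.
move=> Fb n n_lt; rewrite (coef_lsum _ (absz (n - C))); last by lia.
by rewrite big1 // => t _; exact: Fb.
Qed.

End TailSums.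

Section ResidueValuations.
Context {a : int -> laurent} {C : int}.
Hypothesis a_val : forall n : int, n < 0 -> val_ge (a n) (- divz (n * (n + 3)) 2 + C).

Lemma val_ge_a_negS k : val_ge (a (- k%:Z - 1)) (- binom2 k%:Z + k%:Z + 1 + C).
Proof.
have E : divz ((- k%:Z - 1) * (- k%:Z - 1 + 3)) 2 = binom2 k%:Z - k%:Z - 1.
  by rewrite (_ : _ * _ = (binom2 k%:Z - k%:Z - 1) * 2) ?mulzK // !mulrBl binom2E; ring.
by apply: val_geW (a_val _ _) _; rewrite ?E; lia.
Qed.

Lemma val_ge_rterm j k : val_ge (rterm a j k) (k%:Z + 1 + C).
Proof.
rewrite rtermE; case: ifP => _ n n_lt; last by rewrite coef_lzero.
rewrite coef_lopp (val_ge_lmul (val_ge_a_negS k) (val_ge_rweight k j)) ?oppr0 //.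
by have := binom2_ge0 j; lia.
Qed.

Lemma val_ge_rterm_abs j k : val_ge (rterm a j k) (`|j| + 1 + C).
Proof.
case: (ltP k%:Z `|j|) => [k_lt | j_le]; last by apply: val_geW (val_ge_rterm j k) _; lia.
by rewrite rterm_small // => n _; rewrite coef_lzero.
Qed.

End ResidueValuations.

Theorem proposition5p6 (a : int -> laurent)
  (Hlb : exists C : int, forall n : int, n < 0 ->
           val_ge (a n) (- divz (n * (n + 3)) 2 + C)) :
  exists r : int -> laurent,
    (forall j : int, HasSumN (rterm a j) (r j)) /\
    HasSumZ r (lopp (a (-1))).
Proof.
case: Hlb => C a_val; pose r j := lsum C (rterm a j).
have r_val j : val_ge (r j) (`|j| + 1 + C).
  exact: val_ge_lsum (val_ge_rterm a_val j) _ (val_ge_rterm_abs a_val j).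
have pos_val t : val_ge (r t%:Z) (t%:Z + 1 + C) by exact: r_val.
have neg_val t : val_ge (r (- t.+1%:Z)) (t%:Z + 1 + C) by apply: val_geW (r_val _) _; lia.
exists r; split => [j|]; first exact: hasSumN_lsum (val_ge_rterm a_val j).
exists (lsum C (fun t => r t%:Z)), (lsum C (fun t => r (- t.+1%:Z))).
split; first exact: hasSumN_lsum pos_val.
split; first exact: hasSumN_lsum neg_val.
move=> n; have K_ge : n - C <= (absz (n - C)).+1%:Z by lia.
rewrite coef_lopp (coef_lsum pos_val _ _ K_ge) (coef_lsum neg_val _ _ K_ge).
under eq_bigr do rewrite (coef_lsum (val_ge_rterm a_val _) _ _ K_ge).
under [X in _ = _ + X]eq_bigr do rewrite (coef_lsum (val_ge_rterm a_val _) _ _ K_ge).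
rewrite (@sum_int_halves_triangle _ (fun j k => coef (rterm a j k) n)); last first.
  by move=> j k k_lt; rewrite rterm_small ?coef_lzero.
rewrite big_ord_recl sum_rterm_column big1 ?addr0 // => k _.
by rewrite sum_rterm_column.
Qed.
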